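(* Let $A=KQ/I$ be a linear Nakayama algebra with vertices $Q_0=\{1,\ldots,n\}$ labelled canonically $1\to2\to\cdots\to n$, and let $i\in Q_0$ with $e(S_i)\ge 2$. Then there exists an indecomposable $A$-module $M$ with a minimal injective coresolution $0\to M\to I^0\to\cdots\to I^d\to 0$ such that $I^d\cong I(i)$, $d=\operatorname{idim}M=e(S_i)-1$, and moreover $$\underline{\dim}(M)_{[1:\hat h(i)-1]}=r_j(\omega_A,\hat h(i)-1)\quad\text{and}\quad \underline{\dim}(M)_{[\hat h(i):n]}=0$$ for some $j>i$. In particular, $M$ has no composition factor $S_\ell$ with $\ell\ge \hat h(i)$.
   Context: A linear Nakayama algebra is $A=KQ/I$ with $K$ a field, $Q$ the quiver $1\to2\to\cdots\to n$ and $I$ admissible. Modules are finitely generated right modules; $S_i$, $I(i)=D(Ae_i)$ denote simple and indecomposable injective modules, $I(S)$ the injective envelope of $S$, $\Omega$ the syzygy. For a simple $S$, $e(S)=\min\{\operatorname{pdim}S,\operatorname{pdim}I(S)\}$; $N(S)=S$ if $e(S)$ is odd and $N(S)=I(S)$ if $e(S)$ is even; $h(S)=\operatorname{top}\Omega^{e(S)}(N(S))$ (a simple module), and $\hat h(i)=j$ if $h(S_i)\cong S_j$. The Cartan matrix is $\omega_A=(\dim_K e_jAe_i)_{i,j}$ (its $j$-th row is $\underline{\dim}\,I(j)$). For an $n\times n$ matrix $B$, $r_j(B,k)$ denotes the vector of the first $k$ entries of the $j$-th row of $B$; for a vector $v=(v_1,\ldots,v_n)$, $v_{[a:b]}=(v_a,\ldots,v_b)$.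 $\underline{\dim}(M)$ is the dimension vector of $M$. *)

(* Combinatorial model of a linear Nakayama
   algebra A = KQ/I, Q : 1 -> 2 -> ... -> n, via its Kupisch series
   c k = dim_K P(k) = dim_K e_k A. *)
From mathcomp Require Import all_boot.
Set Implicit Arguments. Unset Strict Implicit. Unset Printing Implicit Defensive.

(* c is the Kupisch series of a linear Nakayama algebra with n vertices:
   P(n) = S_n, every arrow k -> k+1 is nonzero in A (I admissible),
   and c k <= c (k+1) + 1. *)
Definition kupisch (n : nat) (c : nat -> nat) : Prop :=
  0 < n /\ c n = 1 /\ (forall k, 1 <= k < n -> 2 <= c k <= (c k.+1).+1).

(* An indecomposable (= uniserial) right A-module is the interval module
   M = (a, b), 1 <= a <= b <= n, with top S_a, socle S_b and composition
   factors S_a, ..., S_b; it exists iff b - a + 1 <= c a. *)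
Definition imod := (nat * nat)%type.

Definition ind_mod (n : nat) (c : nat -> nat) (M : imod) : bool :=
  [&& 1 <= M.1 <= M.2, M.2 <= n & M.2 - M.1 < c M.1].

Definition Pmod (c : nat -> nat) (i : nat) : imod := (i, (i + c i).-1).
Definition Imod (c : nat -> nat) (j : nat) : imod :=
  (head j [seq a <- iota 1 j | j < a + c a], j).

(* Syzygy (kernel of the projective cover P(top M) -> M) and cosyzygy
   (cokernel of the injective envelope M -> I(soc M)); None = zero module. *)
Definition syz (c : nat -> nat) (M : imod) : option imod :=
  if M.2.+1 < M.1 + c M.1 then Some (M.2.+1, (M.1 + c M.1).-1) else None.
Definition cosyz (c : nat -> nat) (M : imod) : option imod :=
  let a' := (Imod c M.2).1 in
  if a' < M.1 then Some (a', M.1.-1) else None.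

Definition Omega (c : nat -> nat) (k : nat) (M : imod) : option imod :=
  iter k (obind (syz c)) (Some M).
Definition coOmega (c : nat -> nat) (k : nat) (M : imod) : option imod :=
  iter k (obind (cosyz c)) (Some M).

(* Both are < n for linear Nakayama
   algebras (the top index strictly increases along syzygies, the socle
   index strictly decreases along cosyzygies), so the search range
   0..n is exhaustive. *)
Definition pdim (n : nat) (c : nat -> nat) (M : imod) : nat :=
  find (fun d => Omega c d.+1 M == None) (iota 0 n.+1).
Definition idim (n : nat) (c : nat -> nat) (M : imod) : nat :=
  find (fun d => coOmega c d.+1 M == None) (iota 0 n.+1).

(* k-th term I^k of the minimal injective coresolution of M:
   the injective envelope I(soc Omega^{-k} M) of Omega^{-k} M. *)
Definition inj_term (c : nat -> nat) (M : imod) (k : nat) : option imod :=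
  omap (fun N : imod => Imod c N.2) (coOmega c k M).

Definition eS (n : nat) (c : nat -> nat) (i : nat) : nat :=
  minn (pdim n c (i, i)) (pdim n c (Imod c i)).
Definition NS (n : nat) (c : nat -> nat) (i : nat) : imod :=
  if odd (eS n c i) then (i, i) else Imod c i.
Definition hhat (n : nat) (c : nat -> nat) (i : nat) : nat :=
  if Omega c (eS n c i) (NS n c i) is Some N then N.1 else 0.

(* Cartan matrix (1-based): cartan i j = dim_K e_j A e_i = number of
   nonzero paths j -> i in A, i.e. 1 iff j <= i <= j + c j - 1. *)
Definition cartan (c : nat -> nat) (i j : nat) : nat :=
  (j <= i) && (i < j + c j).

Definition rowseg (B : nat -> nat -> nat) (j k : nat) : seq nat :=
  [seq B j l | l <- iota 1 k].

Definition dimv (M : imod) (k : nat) : nat := (M.1 <= k <= M.2).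
Definition dimseg (M : imod) (a b : nat) : seq nat :=
  [seq dimv M l | l <- iota a (b.+1 - a)].

From mathcomp Require Import all_boot zify.
Set Implicit Arguments. Unset Strict Implicit. Unset Printing Implicit Defensive.

(* Write G x = Pend c x for the vertex one past the socle of P(x), and
   s b = Istart c b for the top of I(b); on [1, n] they form a Galois connection,
   s b <= x <-> b < G x.  The syzygies of S_i and of I(i) are intervals
   whose tops T follow the recursion T (k+2) = G (T k), starting from
   (i, i+1) and (s i, i+1) respectively.  The two chains agree at odd
   indices and interleave, T_I k <= T_S k < T_I (k+1), and hhat(i) = T_I e.
   Put M = Omega^-1 (Omega^e I(i)).  The socles of its cosyzygies obey
   b (k+2) = s (b k) - 1, and the Galois connection walks them back down the
   interleaved chains, T_S (d-k) <= b k < T_I (d-k+1) with d = e - 1; hence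
   b d = i, and the coresolution stops right after I^d = I(i).  Finally the
   top t of M equals s j for j = G t - 1, so below hhat(i) the module M
   coincides with I(j), whose dimension vector is the j-th row of the
   Cartan matrix. *)

Lemma nat_ind2 (P : nat -> Prop) :
  P 0 -> P 1 -> (forall k, P k -> P k.+2) -> forall k, P k.
Proof.
move=> P0 P1 PSS k; suff: P k /\ P k.+1 by case.
by elim: k => [|k [Pk Pk1]]; split => //; apply: PSS.
Qed.

Fixpoint iter2 (f : nat -> nat) (x0 x1 k : nat) : nat :=
  match k with 0 => x0 | 1 => x1 | k'.+2 => f (iter2 f x0 x1 k') end.

Lemma iter2_odd f x0 y0 x1 k : odd k -> iter2 f x0 x1 k = iter2 f y0 x1 k.
Proof. by elim/nat_ind2: k => // k IH; rewrite /= negbK => /IH ->. Qed.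

Lemma find_iota0 (P : pred nat) m d :
  d < m -> P d -> (forall k, k < d -> ~~ P k) -> find P (iota 0 m) = d.
Proof.
move=> lt_dm Pd notP; rewrite -(subnKC (ltnW lt_dm)) iotaD find_cat size_iota.
have -> : has P (iota 0 d) = false.
  by apply/hasPn => k; rewrite mem_iota => /notP.
by rewrite -(subnSK lt_dm) /= Pd addn0.
Qed.

Lemma dimv_above (M : imod) l : M.2 < l -> dimv M l = 0.
Proof. by move=> lt_Ml; rewrite /dimv [l <= _]leqNgt lt_Ml andbF. Qed.

Lemma dimseg_above (M : imod) a b : M.2 < a -> dimseg M a b = nseq (b.+1 - a) 0.
Proof.
move=> lt_Ma; rewrite -[b.+1 - a](size_iota a) -(size_map (dimv M)).
apply/all_pred1P; rewrite all_map; apply/allP => l; rewrite mem_iota => l_range.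
by rewrite /= dimv_above //; apply: leq_trans lt_Ma _; case/andP: l_range.
Qed.

Lemma dimseg_trunc (M : imod) a b : b <= M.2 -> dimseg M a b = dimseg (M.1, b) a b.
Proof.
move=> le_bM; apply/eq_in_map => l; rewrite mem_iota /dimv /= => l_range.
by have [-> ->] : l <= M.2 /\ l <= b by lia.
Qed.

Definition Pend (c : nat -> nat) (x : nat) : nat := x + c x.
Definition Istart (c : nat -> nat) (b : nat) : nat := (Imod c b).1.

Section Nakayama.
Variables (n : nat) (c : nat -> nat).

Lemma Omega_iter2 x y k (a := iter2 (Pend c) x y.+1) :
  Omega c k (x, y) != None ->
  (forall j, j < k -> a j.+1 < a j.+2) /\ Omega c k (x, y) = Some (a k, (a k.+1).-1).
Proof.
elim: k => [|k IH] //; rewrite /Omega iterS -/(Omega c k (x, y)).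
case: (Omega c k (x, y)) IH => [N|] // /(_ isT) [incr_a ->] /=.
have a_gt0 : 0 < a k.+1.
  by case: k incr_a => [|k] // incr_a; apply: leq_ltn_trans (incr_a k _).
rewrite /syz /= prednK //; case: ifP => // lt_a _; split=> // j.
by rewrite ltnS leq_eqVlt => /predU1P [-> //|]; apply: incr_a.
Qed.

Lemma pdim_le X : pdim n c X <= n.+1.
Proof. by rewrite -[n.+1](size_iota 0); apply: find_size. Qed.

Lemma Omega_le_pdim X k : k <= pdim n c X -> Omega c k X != None.
Proof.
case: k => // k lt_k; have /negbT := before_find 0 lt_k.
by rewrite nth_iota ?add0n //; apply: leq_trans (pdim_le X).
Qed.

Lemma cosyzE a b :
  cosyz c (a, b) = if Istart c b < a then Some (Istart c b, a.-1) else None.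
Proof. by []. Qed.

Lemma idim_eq M d : d <= n -> coOmega c d.+1 M = None ->
  (forall k, k < d -> coOmega c k.+1 M != None) -> idim n c M = d.
Proof. by move=> le_dn MdS Mk; apply: find_iota0 => //; apply/eqP. Qed.

Hypothesis kup : kupisch n c.

Lemma kupisch_gt0 x : 1 <= x <= n -> 0 < c x.
Proof.
case: kup => _ [cn kS] /andP [x_gt0 x_le].
case: (ltngtP x n) x_le => [ltxn _| // | -> _]; last by rewrite cn.
by have := kS x; rewrite x_gt0 ltxn => /(_ isT); lia.
Qed.

Lemma Pend_gt x : 1 <= x <= n -> x < Pend c x.
Proof. by move=> /kupisch_gt0; rewrite /Pend; lia. Qed.

Lemma leq_Pend x : x <= Pend c x.
Proof. exact: leq_addr. Qed.

Lemma Pend_mono x y : 0 < x -> x <= y -> y <= n -> Pend c x <= Pend c y.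
Proof.
move=> x_gt0; elim: y => [|y IH] le_xy le_yn; first lia.
case: (ltngtP x y.+1) le_xy => // [lt_xy|<-] _ //.
have := IH lt_xy (ltnW le_yn); case: kup => _ [_ /(_ y)].
rewrite /Pend; lia.
Qed.

Lemma Pend_le x : 1 <= x <= n -> Pend c x <= n.+1.
Proof.
case/andP=> x_gt0 le_xn; have := Pend_mono x_gt0 le_xn (leqnn n).
by case: kup => _ [cn _]; rewrite /Pend cn addn1.
Qed.

Lemma Istart_spec b : 1 <= b <= n ->
  [/\ 1 <= Istart c b <= b, b < Pend c (Istart c b)
    & forall a, 0 < a < Istart c b -> Pend c a <= b].
Proof.
move=> b_range; pose p a := b < Pend c a.
have has_p : has p (iota 1 b).
  by apply/hasP; exists b; [rewrite mem_iota; lia | apply: Pend_gt].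
have lt_find : find p (iota 1 b) < b.
  by rewrite -[X in _ < X](size_iota 1) -has_find.
have IstartE : Istart c b = nth b (iota 1 b) (find p (iota 1 b)).
  rewrite [LHS]/Istart /=; elim: (iota 1 b) => //= a s IH.
  by rewrite /p /Pend in IH *; case: ifP.
split.
- by rewrite IstartE nth_iota //; lia.
- by rewrite IstartE; apply: (nth_find b has_p).
- move=> a /andP [a_gt0 lt_a].
  have lt_af : a.-1 < find p (iota 1 b).
    by move: lt_a; rewrite IstartE nth_iota //; lia.
  have := before_find 0 lt_af; rewrite nth_iota ?add1n ?prednK /p //; lia.
Qed.

Lemma Istart_leE b x : 1 <= b <= n -> 1 <= x <= n ->
  (Istart c b <= x) = (b < Pend c x).
Proof.
move=> b_range x_range; have [/andP [s_gt0 _] lt_b min_s] := Istart_spec b_range.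
apply/idP/idP => [le_sx | lt_bx].
- by apply: leq_trans lt_b (Pend_mono s_gt0 le_sx _); case/andP: x_range.
- by rewrite leqNgt; apply/negP => lt_xs; have := min_s x; lia.
Qed.

Lemma Istart_range b : 1 <= b <= n -> 1 <= Istart c b <= b.
Proof. by case/Istart_spec. Qed.

Lemma Pend_Istart_gt b : 1 <= b <= n -> b < Pend c (Istart c b).
Proof. by case/Istart_spec. Qed.

Lemma Istart_between x y b : 0 < x -> 1 <= y <= n -> 1 <= b <= n ->
  Pend c x <= b -> b < Pend c y -> x < Istart c b <= y.
Proof.
move=> x_gt0 y_range b_range le_xb lt_by.
have x_range : 1 <= x <= n by have := leq_Pend x; lia.
by rewrite Istart_leE // lt_by andbT ltnNge Istart_leE // -leqNgt.
Qed.

Lemma Istart_Pend_Istart y : 1 <= y <= n ->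
  Istart c (Pend c (Istart c y)).-1 = Istart c y.
Proof.
move=> y_range; set s := Istart c y.
have s_range : 1 <= s <= n by have := Istart_range y_range; lia.
have := Pend_gt s_range; have := Pend_le s_range; have := Pend_Istart_gt y_range.
rewrite -/s => lt_yP le_Pn lt_sP.
have j_range : 1 <= (Pend c s).-1 <= n by lia.
apply/eqP; rewrite eqn_leq [Istart _ _ <= s]Istart_leE ?prednK ?leqnn //=; last lia.
rewrite Istart_leE //; last by have := Istart_range j_range; lia.
by apply: leq_ltn_trans (Pend_Istart_gt j_range); lia.
Qed.

Lemma iter2_Pend_range x0 x1 m (a := iter2 (Pend c) x0 x1) :
  1 <= x0 <= n -> 0 < x1 -> (forall j, j < m -> a j.+1 < a j.+2) ->
  forall k, k <= m -> 1 <= a k <= n.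
Proof.
move=> x0_range x1_gt0 incr_a.
have a_gt0 k : 0 < a k.
  elim/nat_ind2: k => [|//|k a_gt0]; first by case/andP: x0_range.
  exact: leq_trans a_gt0 (leq_Pend _).
elim=> // k IH le_km; rewrite a_gt0 /=.
have := incr_a k le_km; have := Pend_le (IH (ltnW le_km)); rewrite /a /=; lia.
Qed.

Lemma rowseg_cartan j k : 1 <= j <= n -> k <= n ->
  rowseg (cartan c) j k = dimseg (Imod c j) 1 k.
Proof.
move=> j_range le_kn; rewrite /dimseg subSS subn0 /rowseg.
apply/eq_in_map => l; rewrite mem_iota => l_range.
by rewrite /cartan /dimv -/(Istart c j) Istart_leE 1?andbC //; lia.
Qed.

Section InjectiveCoresolution.
Variables (i d : nat).
Hypotheses (i_range : 1 <= i <= n) (d_gt0 : 0 < d) (eS_i : eS n c i = d.+1).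

(* Omega^k S_i = (topS k, (topS k.+1).-1) and Omega^k I(i) = (topI k, (topI k.+1).-1),
   as long as these are nonzero. *)
Definition topS := iter2 (Pend c) i i.+1.
Definition topI := iter2 (Pend c) (Istart c i) i.+1.

Lemma Omega_Si : (forall j, j < d.+1 -> topS j.+1 < topS j.+2) /\
  Omega c d.+1 (i, i) = Some (topS d.+1, (topS d.+2).-1).
Proof. by apply: Omega_iter2; apply: Omega_le_pdim; rewrite -eS_i geq_minl. Qed.

Lemma Omega_Ii : (forall j, j < d.+1 -> topI j.+1 < topI j.+2) /\
  Omega c d.+1 (Imod c i) = Some (topI d.+1, (topI d.+2).-1).
Proof. by apply: Omega_iter2; apply: Omega_le_pdim; rewrite -eS_i geq_minr. Qed.

Lemma topS_range k : k <= d.+1 -> 1 <= topS k <= n.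
Proof. by apply: iter2_Pend_range => //; case: Omega_Si. Qed.

Lemma topI_range k : k <= d.+1 -> 1 <= topI k <= n.
Proof.
apply: iter2_Pend_range => //; last by case: Omega_Ii.
by have := Istart_range i_range; lia.
Qed.

Lemma topI_le_topS k : k <= d.+1 -> topI k <= topS k.
Proof.
elim/nat_ind2: k => [|//|k IH /ltnW/ltnW le_kd].
  by case/andP: (Istart_range i_range).
have /andP [topI_gt0 _] := topI_range le_kd; have /andP [_ topS_le] := topS_range le_kd.
exact: (Pend_mono topI_gt0 (IH le_kd) topS_le).
Qed.

Lemma topS_lt_topI k : 0 < k <= d.+1 -> topS k < topI k.+1.
Proof.
case: k => // k /= le_kd; case: Omega_Si Omega_Ii => [incrS _] [incrI _].
case: (boolP (odd k)) => [odd_k | even_k].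
- by rewrite /topI (iter2_odd _ _ i) /= ?odd_k //; apply: incrS.
- by rewrite /topS (iter2_odd _ _ (Istart c i)) /= ?even_k //; apply: incrI.
Qed.

Lemma hhatE : hhat n c i = topI d.+1.
Proof.
rewrite /hhat /NS eS_i; case: ifP => [odd_d1 | _]; last by case: Omega_Ii => _ ->.
by case: Omega_Si => _ ->; rewrite /= /topS (iter2_odd _ _ (Istart c i)).
Qed.

Lemma topS_ge k : i <= topS k.
Proof.
elim/nat_ind2: k => [||k le_ik] //.
exact: leq_trans le_ik (leq_Pend _).
Qed.

(* Some Mmod = cosyz c (Omega c d.+1 (Imod c i)). *)
Definition Mtop := Istart c (topI d.+2).-1.
Definition Mmod : imod := (Mtop, (topI d.+1).-1).
Definition socM := iter2 (fun b => (Istart c b).-1) (topI d.+1).-1 Mtop.-1.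

Lemma socI_range : 1 <= (topI d.+2).-1 <= n.
Proof.
have topI_d := topI_range (leqnSn d); have := Pend_le topI_d.
have := topI_range (leqnn d.+1); case: Omega_Ii => incrI _; have := incrI d (ltnSn d).
by change (topI d.+2) with (Pend c (topI d)); lia.
Qed.

Lemma Mtop_bounds : topS d.-1 < Mtop <= topI d /\ topI d.+1 < Pend c Mtop.
Proof.
have topI_d := topI_range (leqnSn d).
have topI_d1 := topI_range (leqnn d.+1).
have topS_d1 := topS_range (leq_trans (leq_pred d) (leqnSn d)).
have lt_topI : topI d.+1 < topI d.+2 by case: Omega_Ii => incrI _; apply: incrI.
have lt_SI : Pend c (topS d.-1) < Pend c (topI d).
  have := @topS_lt_topI d.+1; rewrite ltnSn => /(_ isT).
  by rewrite -[in topS _](prednK d_gt0).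
have y_range := socI_range; rewrite /Mtop.
rewrite [topI d.+2]/(Pend c (topI d)) in lt_topI y_range *.
split; first by apply: Istart_between => //; rewrite /Pend in lt_SI *; lia.
by apply: leq_ltn_trans _ (Pend_Istart_gt y_range); lia.
Qed.

Lemma Istart_Pend_Mtop : Istart c (Pend c Mtop).-1 = Mtop.
Proof. exact: Istart_Pend_Istart socI_range. Qed.

Lemma socM_bounds j k : j + k = d -> topS k <= socM j < topI k.+1.
Proof.
have [/andP [lt_SMtop le_Mtop] _] := Mtop_bounds.
elim/nat_ind2: j k => [k|k|j IH k].
- move=> kd; have -> : k = d by lia.
  have := topI_range (leqnn d.+1); have := @topS_lt_topI d.
  by rewrite d_gt0 leqnSn => /(_ isT); rewrite /socM /=; lia.
- move=> kd; have -> : k = d.-1 by lia.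
  by rewrite prednK //= /socM /=; lia.
- move=> jkd; have /IH /andP [le_Sb lt_bI] : j + k.+2 = d by lia.
  have S_k := topS_range (k := k) ltac:(lia).
  have I_k1 := topI_range (k := k.+1) ltac:(lia).
  have b_range : 1 <= socM j <= n.
    have := topS_range (k := k.+2) ltac:(lia).
    by have := topI_range (k := k.+3) ltac:(lia); lia.
  have /andP [lt_Ss le_sI] :=
    Istart_between (x := topS k) ltac:(lia) I_k1 b_range le_Sb lt_bI.
  by rewrite /socM /= -/socM; lia.
Qed.

Lemma socM_range j : j <= d -> 1 <= socM j <= n.
Proof.
move=> le_jd; have /andP [le_Sb lt_bI] := @socM_bounds j (d - j) (subnKC le_jd).
have := topS_range (k := d - j) ltac:(lia).
by have := topI_range (k := (d - j).+1) ltac:(lia); lia.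
Qed.

Lemma socM_last : socM d = i.
Proof. by have := @socM_bounds d 0 (addn0 d); rewrite /topS /topI /=; lia. Qed.

Lemma Istart_socM_le j : j < d -> Istart c (socM j) <= socM j.+1.
Proof.
move=> lt_jd; have [k kd] : exists k, j.+1 + k = d by exists (d - j.+1); lia.
have /andP [_ lt_bI] := @socM_bounds j k.+1 ltac:(lia).
have /andP [le_Sb' _] := @socM_bounds j.+1 k ltac:(lia).
have le_IS := @topI_le_topS k.+2 ltac:(lia).
have S_k := topS_range (k := k) ltac:(lia).
rewrite Istart_leE ?socM_range //; try lia.
apply: leq_trans lt_bI (leq_trans le_IS _).
by apply: Pend_mono le_Sb' _; have := socM_range (j := j.+1); lia.
Qed.

Lemma Istart_socM_pen : Istart c (socM d.-1) <= Istart c i.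
Proof.
have /andP [_ lt_bI] := @socM_bounds d.-1 1 ltac:(lia).
by rewrite Istart_leE ?socM_range ?leq_pred //; have := Istart_range i_range; lia.
Qed.

Lemma coOmega_Mmod k : k <= d -> coOmega c k Mmod = Some ((socM k.+1).+1, socM k).
Proof.
elim: k => [_ | k IH lt_kd]; first by rewrite /socM /= prednK //; case: Mtop_bounds; lia.
rewrite /coOmega iterS -/(coOmega c k Mmod) IH ?(ltnW lt_kd) //= cosyzE ltnS.
rewrite Istart_socM_le //; congr (Some (_, _)).
have /andP [s_gt0 _] := Istart_range (socM_range (ltnW lt_kd)).
by rewrite /socM /= -/socM prednK.
Qed.

Lemma coOmega_Mmod_last : coOmega c d.+1 Mmod = None.
Proof.
rewrite /coOmega iterS -/(coOmega c d Mmod) coOmega_Mmod //=.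
rewrite cosyzE socM_last ltnS.
have := Istart_socM_pen; have := Istart_range (socM_range (leq_pred d)).
by rewrite -[in socM d.+1](prednK d_gt0) /socM /= -/socM; case: ifP => //; lia.
Qed.

Lemma idim_Mmod : idim n c Mmod = d.
Proof.
apply: idim_eq coOmega_Mmod_last _ => [|k lt_kd].
- have le_pdim : d.+1 <= pdim n c (i, i) by rewrite -eS_i geq_minl.
  exact: leq_trans le_pdim (pdim_le _).
- by rewrite coOmega_Mmod.
Qed.

Lemma ind_mod_Mmod : ind_mod n c Mmod.
Proof.
have [/andP [lt_SM le_Mtop] lt_P] := Mtop_bounds.
have lt_II : topI d < topI d.+1.
  by case: Omega_Ii => incrI _; have := incrI d.-1 ltac:(lia); rewrite prednK.
have := topI_range (leqnn d.+1); have := topI_range (leqnSn d).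
by rewrite /ind_mod /=; rewrite /Pend in lt_P; lia.
Qed.

Lemma Mmod_cartan_row : exists2 j, i < j <= n &
  dimseg Mmod 1 (topI d.+1).-1 = rowseg (cartan c) j (topI d.+1).-1.
Proof.
have [/andP [lt_SM le_Mtop] lt_P] := Mtop_bounds.
have Mtop_range : 1 <= Mtop <= n by have := topI_range (leqnSn d); lia.
have := Pend_le Mtop_range; have := Pend_gt Mtop_range; have := topS_ge d.
have := topI_range (leqnn d.+1); have := @topS_lt_topI d.
rewrite d_gt0 leqnSn => /(_ isT) lt_SI topI_d1 le_iS lt_MP le_Pn.
exists (Pend c Mtop).-1; first lia.
rewrite rowseg_cartan; try lia.
have -> : Imod c (Pend c Mtop).-1 = (Mtop, (Pend c Mtop).-1).
  by rewrite -[X in (X, _)]Istart_Pend_Mtop.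
by rewrite [RHS]dimseg_trunc //=; lia.
Qed.

End InjectiveCoresolution.
End Nakayama.

Unset Implicit Arguments.

Theorem lemma3p3 (n : nat) (c : nat -> nat) (i : nat) :
  kupisch n c -> 1 <= i <= n -> 2 <= eS n c i ->
  exists M : imod,
    [/\ ind_mod n c M,
        inj_term c M (idim n c M) = Some (Imod c i),
        idim n c M = (eS n c i).-1,
        (exists j, [/\ i < j <= n,
            dimseg M 1 (hhat n c i).-1 = rowseg (cartan c) j (hhat n c i).-1 &
            dimseg M (hhat n c i) n = nseq (n.+1 - hhat n c i) 0])
      & forall l, hhat n c i <= l -> dimv M l = 0].
Proof.
move=> kup i_range eS_ge2.
have d_gt0 : 0 < (eS n c i).-1 by rewrite -ltnS prednK // ltnW.
have eS_i : eS n c i = (eS n c i).-1.+1 by rewrite prednK // ltnW.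
move: d_gt0 eS_i; set d := (eS n c i).-1 => d_gt0 eS_i.
have idimM := idim_Mmod kup i_range d_gt0 eS_i.
have [j ij_range rowj] := Mmod_cartan_row kup i_range d_gt0 eS_i.
have Mmod_below l : topI c i d.+1 <= l -> (Mmod c i d).2 < l.
  have /andP [h_gt0 _] := topI_range kup i_range d_gt0 eS_i (leqnn d.+1).
  by move=> /(leq_trans _)-> //; rewrite prednK.
rewrite (hhatE eS_i); exists (Mmod c i d); split.
- exact: ind_mod_Mmod.
- by rewrite idimM /inj_term (coOmega_Mmod kup) //= (socM_last kup).
- exact: idimM.
- by exists j; split; rewrite // dimseg_above // Mmod_below.
- by move=> l /Mmod_below /dimv_above.
Qed.
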